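(* Let $k$ be a field, $V$ a $k$-vector space, and $\varphi\in\operatorname{End}_k(V)$ a finite potent endomorphism with core-nilpotent decomposition $\varphi=\varphi_1+\varphi_2$. Then the Drazin inverse $\varphi^D$ of $\varphi$ is a G-Drazin inverse of $\varphi_1$.
   Context: An endomorphism $\varphi$ of a $k$-vector space $V$ is finite potent if $\varphi^n(V)$ is finite dimensional for some $n$. For such $\varphi$, the AST-decomposition is $V=U_\varphi\oplus W_\varphi$ where $U_\varphi=\{v\in V: \varphi^m(v)=0 \text{ for some } m\}$ and $W_\varphi=\{v\in V: p(\varphi)(v)=0 \text{ for some } p(x)\in k[x] \text{ coprime to } x\}$; $\varphi|_{U_\varphi}$ is nilpotent, $W_\varphi$ is finite dimensional and $\varphi|_{W_\varphi}$ is an automorphism. The index $i(\theta)$ of a finite potent $\theta$ is the nilpotency order of $\theta|_{U_\theta}$. The Drazin inverse $\varphi^D$ equals $(\varphi|_{W_\varphi})^{-1}$ on $W_\varphi$ and $0$ on $U_\varphi$. The core-nilpotent decomposition is $\varphi=\varphi_1+\varphi_2$ with $\varphi_1=\varphi\circ\varphi^D\circ\varphi$ and $\varphi_2=\varphi-\varphi_1$. An endomorphism $\psi$ is a G-Drazin inverse of a finite potent $\theta$ with $s=i(\theta)$ if $\theta\circ\psi\circ\theta=\theta$ and $\psi\circ\theta^{s}=\theta^{s}\circ\psi$. *)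

From HB Require Import structures.
From mathcomp Require Import all_boot all_order all_algebra.
Set Implicit Arguments. Unset Strict Implicit. Unset Printing Implicit Defensive.
Import GRing.Theory.
Local Open Scope ring_scope.

Section FinPotent.
Variables (k : fieldType) (V : lmodType k).

Definition fin_dim_set (S : V -> Prop) : Prop :=
  exists (n : nat) (b : 'I_n -> V),
    forall v, S v -> exists c : 'I_n -> k, v = \sum_(i < n) c i *: b i.

Definition iter_image (phi : V -> V) (n : nat) : V -> Prop :=
  fun v => exists u, v = iter n phi u.

Definition finite_potent (phi : V -> V) : Prop :=
  exists n, fin_dim_set (iter_image phi n).

Definition poly_end (p : {poly k}) (phi : V -> V) (v : V) : V :=
  \sum_(i < size p) p`_i *: iter i phi v.

Definition U_part (phi : V -> V) : V -> Prop :=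
  fun v => exists m, iter m phi v = 0.
Definition W_part (phi : V -> V) : V -> Prop :=
  fun v => exists p : {poly k}, coprimep p 'X /\ poly_end p phi v = 0.

Definition is_index (theta : V -> V) (s : nat) : Prop :=
  (forall v, U_part theta v -> iter s theta v = 0) /\
  (forall m, (forall v, U_part theta v -> iter m theta v = 0) -> (s <= m)%N).

Definition is_drazin_inverse (phi psi : V -> V) : Prop :=
  (forall v, U_part phi v -> psi v = 0) /\
  (forall w, W_part phi w -> W_part phi (psi w) /\ phi (psi w) = w).

Definition is_GDrazin_inverse (theta psi : V -> V) : Prop :=
  finite_potent theta /\
  (forall v, theta (psi (theta v)) = theta v) /\
  exists s, is_index theta s /\
    (forall v, psi (iter s theta v) = iter s theta (psi v)).

End FinPotent.

From mathcomp Require Import all_boot all_order all_algebra.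
From mathcomp Require Import ring.
From Stdlib Require Import Classical.
Set Implicit Arguments. Unset Strict Implicit. Unset Printing Implicit Defensive.
Import GRing.Theory.
Local Open Scope ring_scope.

(** Finite potence makes every vector a root of a nonzero polynomial in
   [phi]; splitting off the power of [X] in that polynomial with a Bezout
   identity gives [V = U_phi + W_phi].  Then [phi^D phi] is the projection
   onto [W_phi] along [U_phi] and commutes with [phi], so the core part
   [phi_1 = phi phi^D phi] acts as [phi] on [W_phi] and vanishes on [U_phi].
   Hence [phi_1 phi^D phi_1 = phi_1], the powers of [phi_1] have images inside
   those of [phi], the nilpotent part of [phi_1] is already killed by [phi_1]
   itself (so its index exists and is at most one), and [phi^D] commutes with
   [phi_1], hence with all its powers. *)

Lemma iter_comm (T : Type) (f g : T -> T) n :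
  (forall x, f (g x) = g (f x)) -> forall x, f (iter n g x) = iter n g (f x).
Proof. by move=> fg x; elim: n => //= n IHn; rewrite fg IHn. Qed.

Lemma tall_mx_dependent_rows (k : fieldType) d (M : 'M[k]_(d.+1, d)) :
  exists2 x : 'rV_d.+1, x != 0 & x *m M = 0.
Proof.
have : kermx M != 0.
  rewrite kermx_eq0 /row_free; apply/negP => /eqP rkM.
  by have := rank_leq_col M; rewrite rkM ltnn.
by case/rowV0Pn => x; rewrite sub_kermx => /eqP xM0 x_neq0; exists x.
Qed.

Section PolyEnd.
Variables (k : fieldType) (V : lmodType k) (phi : {linear V -> V}).

Lemma iter_linear0 n : iter n phi 0 = 0.
Proof. by elim: n => //= n ->; rewrite linear0. Qed.

Lemma iter_linearB n x y : iter n phi (x - y) = iter n phi x - iter n phi y.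
Proof. by elim: n => //= n ->; rewrite linearB. Qed.

Lemma poly_end_widen (p : {poly k}) N v : (size p <= N)%N ->
  poly_end p phi v = \sum_(i < N) p`_i *: iter i phi v.
Proof.
move=> le_pN; rewrite /poly_end (big_ord_widen N (fun i => p`_i *: iter i phi v)) //.
rewrite big_mkcond; apply: eq_bigr => i _; case: ifPn => // /negbTE.
by rewrite ltnNge => /negbFE le_pi; rewrite nth_default ?scale0r.
Qed.

Lemma poly_end0 v : poly_end 0 phi v = 0.
Proof. by rewrite /poly_end size_poly0 big_ord0. Qed.

Lemma poly_endC c v : poly_end c%:P phi v = c *: v.
Proof. by rewrite (@poly_end_widen _ 1) ?size_polyC_leq1 // big_ord1 coefC. Qed.

Lemma poly_end1 v : poly_end 1 phi v = v.
Proof. by rewrite -polyC1 poly_endC scale1r. Qed.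

Lemma poly_endD p q v :
  poly_end (p + q) phi v = poly_end p phi v + poly_end q phi v.
Proof.
rewrite !(@poly_end_widen _ (maxn (size p) (size q))) ?leq_maxl ?leq_maxr ?size_polyD //.
by rewrite -big_split; apply: eq_bigr => i _; rewrite coefD scalerDl.
Qed.

Lemma poly_endZ c p v : poly_end (c *: p) phi v = c *: poly_end p phi v.
Proof.
rewrite !(@poly_end_widen _ (size p)) ?size_scale_leq // scaler_sumr.
by apply: eq_bigr => i _; rewrite coefZ scalerA.
Qed.

Lemma poly_endXM q v : poly_end ('X * q) phi v = phi (poly_end q phi v).
Proof.
have le_Xq : (size ('X * q)%R <= (size q).+1)%N.
  by apply: leq_trans (size_polyMleq _ _) _; rewrite size_polyX.
rewrite (poly_end_widen _ le_Xq) big_ord_recl coefXM scale0r add0r.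
by rewrite linear_sum; apply: eq_bigr => i _; rewrite coefXM linearZ.
Qed.

Lemma poly_endM p q v : poly_end (p * q) phi v = poly_end p phi (poly_end q phi v).
Proof.
elim/poly_ind: p q v => [|p c IHp] q v; first by rewrite mul0r !poly_end0.
rewrite mulrDl -mulrA poly_endD IHp poly_endXM mul_polyC poly_endZ.
by rewrite poly_endD poly_endC IHp -['X]mulr1 poly_endXM poly_end1.
Qed.

Lemma poly_endX v : poly_end 'X phi v = phi v.
Proof. by rewrite -['X]mulr1 poly_endXM poly_end1. Qed.

Lemma poly_endXn n v : poly_end 'X^n phi v = iter n phi v.
Proof. by elim: n v => [|n IHn] v; rewrite ?poly_end1 // exprS poly_endXM IHn. Qed.

Lemma poly_end_comm p v : poly_end p phi (phi v) = phi (poly_end p phi v).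
Proof. by rewrite -poly_endX -poly_endM mulrC poly_endM poly_endX. Qed.

Lemma poly_end_linear0 p : poly_end p phi 0 = 0.
Proof. by rewrite /poly_end big1 // => i _; rewrite iter_linear0 scaler0. Qed.

Lemma poly_end_linearB p x y :
  poly_end p phi (x - y) = poly_end p phi x - poly_end p phi y.
Proof.
by rewrite /poly_end -sumrB; apply: eq_bigr => i _; rewrite iter_linearB scalerBr.
Qed.

End PolyEnd.

Section ASTDecomposition.
Variables (k : fieldType) (V : lmodType k) (phi : {linear V -> V}).

Local Notation U := (U_part phi).
Local Notation W := (W_part phi).

Lemma U_part_phi u : U u -> U (phi u).
Proof. by case=> m hm; exists m; rewrite -iterSr iterS hm linear0. Qed.

Lemma W_part_phi w : W w -> W (phi w).
Proof. by case=> p [cop hp]; exists p; rewrite poly_end_comm hp linear0. Qed.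

Lemma W_part_iter n w : W w -> W (iter n phi w).
Proof. by elim: n => //= n IHn /IHn; apply: W_part_phi. Qed.

Lemma W_partB x y : W x -> W y -> W (x - y).
Proof.
case=> p [cop hp] [q [coq hq]]; exists (p * q); rewrite coprimepMl cop coq.
by rewrite poly_end_linearB {1}mulrC !poly_endM hp hq !poly_end_linear0 subr0.
Qed.

(* [p(phi) w = p(0) w] when [phi w = 0], and [p(0) != 0]. *)
Lemma W_part_ker w : W w -> phi w = 0 -> w = 0.
Proof.
case=> p [cop hp] phiw0; move: hp cop.
rewrite (@poly_end_widen _ _ _ _ (size p).+1) // big_ord_recl big1 ?addr0 => [|i _].
  by move/eqP; rewrite scaler_eq0 coprimepX rootE horner_coef0 => /orP[->|/eqP].
by rewrite lift0 iterSr phiw0 iter_linear0 scaler0.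
Qed.

Lemma W_part_iter_ker n w : W w -> iter n phi w = 0 -> w = 0.
Proof.
elim: n w => [//|n IHn] w Ww; rewrite iterSr => hn.
by apply: W_part_ker => //; apply: IHn hn; apply: W_part_phi.
Qed.

Lemma annihilated_U_W_decomposition (P : {poly k}) v :
  P != 0 -> poly_end P phi v = 0 -> exists u w, [/\ U u, W w & v = u + w].
Proof.
move=> P_neq0 Pv0; have [m [r]] := multiplicity_XsubC P 0.
rewrite P_neq0 subr0 => /= r0_neq0 defP.
have cop_r : coprimep r 'X by rewrite coprimepX.
have [[a b] /= Bezout] := Bezout_eq1_coprimepP _ _ (coprimep_expr m cop_r).
exists (poly_end (a * r) phi v), (poly_end (b * 'X^m) phi v); split.
- exists m; rewrite -poly_endXn -poly_endM.
  have -> : 'X^m * (a * r) = a * P by rewrite defP; ring.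
  by rewrite poly_endM Pv0 poly_end_linear0.
- exists r; split => //; rewrite -poly_endM.
  have -> : r * (b * 'X^m) = b * P by rewrite defP; ring.
  by rewrite poly_endM Pv0 poly_end_linear0.
- by rewrite -poly_endD Bezout poly_end1.
Qed.

(* The [d.+1] vectors [phi^(n+i) v] lie in a span of [d] vectors. *)
Lemma finite_potent_annihilated : finite_potent phi ->
  forall v, exists2 P : {poly k}, P != 0 & poly_end P phi v = 0.
Proof.
move=> [n [d [b spanb]]] v.
have coords (i : 'I_d.+1) : exists c : 'I_d -> k,
    iter (i + n) phi v = \sum_(j < d) c j *: b j.
  by apply: spanb; exists (iter i phi v); rewrite addnC iterD.
have [c def_c] := fin_all_exists coords.
have [x x_neq0 xc0] := tall_mx_dependent_rows (\matrix_(i, j) c i j).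
pose q : {poly k} := \poly_(i < d.+1) x 0 (inord i).
have q_neq0 : q != 0.
  apply: contra x_neq0 => /eqP q0; apply/eqP/matrixP => i j.
  have := congr1 (fun p : {poly k} => p`_j) q0.
  by rewrite (ord1 i) !mxE coef_poly ltn_ord inord_val coef0.
have xc0j j : \sum_(i < d.+1) x 0 i * c i j = 0.
  have := congr1 (fun m : 'M[k]_(1, d) => m 0 j) xc0; rewrite !mxE.
  by under eq_bigr do rewrite mxE.
exists (q * 'X^n); first by rewrite mulf_neq0 ?expf_neq0 ?polyX_eq0.
rewrite poly_endM poly_endXn (@poly_end_widen _ _ _ _ d.+1) ?size_poly //.
under eq_bigr => i _ do
  rewrite coef_poly ltn_ord inord_val -iterD def_c scaler_sumr.
rewrite exchange_big big1 //= => j _.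
by under eq_bigr => i _ do rewrite scalerA; rewrite -scaler_suml xc0j scale0r.
Qed.

Lemma U_W_decomposition : finite_potent phi ->
  forall v, exists u w, [/\ U u, W w & v = u + w].
Proof.
move=> fp v; have [P P_neq0 Pv0] := finite_potent_annihilated fp v.
exact: annihilated_U_W_decomposition Pv0.
Qed.

End ASTDecomposition.

Lemma is_index_exists (k : fieldType) (V : lmodType k) (theta : {linear V -> V}) s :
  (forall v, U_part theta v -> iter s theta v = 0) -> exists s', is_index theta s'.
Proof.
elim: s => [|s IHs] kill_s; first by exists 0%N.
have [kill_s'|not_kill_s] :=
  classic (forall v, U_part theta v -> iter s theta v = 0); first exact: IHs kill_s'.
exists s.+1; split => // m kill_m; rewrite leqNgt ltnS; apply/negP => le_ms.
apply: not_kill_s => v Uv.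
by rewrite -(subnK le_ms) iterD kill_m // iter_linear0.
Qed.

Section DrazinCore.
Variables (k : fieldType) (V : lmodType k) (phi phiD : {linear V -> V}).
Hypotheses (fp_phi : finite_potent phi) (drazin : is_drazin_inverse phi phiD).

Local Notation W := (W_part phi).

Lemma drazinK_W w : W w -> phiD (phi w) = w.
Proof.
move=> Ww; have [WDw phiDw] := drazin.2 _ (W_part_phi Ww).
apply/eqP; rewrite -subr_eq0; apply/eqP.
apply: (W_part_ker (phi := phi)); first exact: W_partB.
by rewrite linearB phiDw subrr.
Qed.

Lemma drazin_in_W v : W (phiD v).
Proof.
have [u [w [Uu Ww ->]]] := U_W_decomposition fp_phi v.
by rewrite linearD (drazin.1 u) // add0r; case: (drazin.2 _ Ww).
Qed.

Lemma drazin_comm v : phiD (phi v) = phi (phiD v).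
Proof.
have [u [w [Uu Ww ->]]] := U_W_decomposition fp_phi v.
rewrite !linearD (drazin.1 _ (U_part_phi Uu)) (drazin.1 u) // linear0.
by rewrite !add0r drazinK_W //; case: (drazin.2 _ Ww).
Qed.

Let theta : {linear V -> V} := phi \o phiD \o phi.

Lemma core_iter n v : iter n.+1 theta v = iter n.+1 phi (phiD (phi v)).
Proof.
elim: n => [//|n IHn]; rewrite iterS IHn.
have Wn : W (iter n.+1 phi (phiD (phi v))) by apply/W_part_iter/drazin_in_W.
by rewrite [LHS]/= (drazinK_W Wn).
Qed.

Lemma core_iter_image n v : iter_image theta n v -> iter_image phi n v.
Proof.
case: n => [|n] [u ->]; first by exists u.
by rewrite core_iter; exists (phiD (phi u)).
Qed.

Lemma core_finite_potent : finite_potent theta.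
Proof.
have [n [d [b spanb]]] := fp_phi.
by exists n, d, b => v /core_iter_image; apply: spanb.
Qed.

Lemma core_drazin_inner_inverse v : theta (phiD (theta v)) = theta v.
Proof. by rewrite /= !(drazinK_W (drazin_in_W _)). Qed.

Lemma core_U_part_ker v : U_part theta v -> theta v = 0.
Proof.
case=> [[|n]]; first by move=> /= ->; rewrite !linear0.
by rewrite core_iter => /(W_part_iter_ker (drazin_in_W _)) /= ->; rewrite linear0.
Qed.

Lemma core_drazin_comm v : phiD (theta v) = theta (phiD v).
Proof. by rewrite /= !(drazinK_W (drazin_in_W _)) drazin_comm. Qed.

End DrazinCore.

Theorem corollary3p6 (k : fieldType) (V : lmodType k)
    (phi phiD : {linear V -> V}) :
  finite_potent phi ->
  is_drazin_inverse phi phiD ->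
  is_GDrazin_inverse (fun v => phi (phiD (phi v))) phiD.
Proof.
move=> fp_phi drazin.
have [s index_s] : exists s, is_index (phi \o phiD \o phi) s.
  by apply: (@is_index_exists _ _ _ 1) => v /(core_U_part_ker fp_phi drazin).
split; [|split].
- exact: core_finite_potent.
- exact: core_drazin_inner_inverse.
- exists s; split=> // v; apply: iter_comm.
  exact: core_drazin_comm.
Qed.
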